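(* If $\mathbb{C}$ is a regular majority category, then the Pairwise Chinese Remainder Theorem holds in $\mathbb{C}$.
   Context: A category is regular if it has finite limits and coequalizers of kernel pairs and regular epimorphisms are pullback-stable. For $w:S\to W$ and subobject $A$ of $W$, $w\in_S A$ means $w$ factors through a representative of $A$. A ternary relation $R\leqslant X\times Y\times Z$ is majority-selecting if for all $S$ and $x,x':S\to X$, $y,y':S\to Y$, $z,z':S\to Z$: $(x,y,z')\in_S R$, $(x,y',z)\in_S R$, $(x',y,z)\in_S R$ imply $(x,y,z)\in_S R$; a majority category is one in which every ternary relation is majority-selecting. For an equivalence relation $\theta$ on $X$ and $a,b:S\to X$, $a\equiv b\bmod\theta$ means $(a,b)\in_S\theta$. An equivalence relation is effective if it is the kernel pair of some morphism. Given $a_1,\dots,a_m:S\to X$ and equivalence relations $\theta_1,\dots,\theta_m$ on $X$, the system $x\equiv a_i\bmod\theta_i$ ($i=1,\dots,m$) is approximately solvable if there are a regular epimorphism $\alpha:Q\to S$ and a morphism $a:Q\to X$ with $a\equiv a_i\alpha\bmod\theta_i$ for all $i$; it is approximately pairwise solvable if for all $i,j$ the two-equation subsystem for $i,j$ is approximately solvable. The Pairwise Chinese Remainder Theorem holds in $\mathbb{C}$ if for every object $X$, every $m$, all $a_1,\dots,a_m:S\to X$ and all effective equivalence relations $\theta_1,\dots,\theta_m$ on $X$, approximate pairwise solvability implies approximate solvability. *)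

Set Implicit Arguments.
Unset Strict Implicit.

Record Category := {
  Obj :> Type;
  Hom : Obj -> Obj -> Type;
  idm : forall A, Hom A A;
  comp : forall A B D, Hom B D -> Hom A B -> Hom A D;
  comp_id_l : forall A B (f : Hom A B), comp (idm B) f = f;
  comp_id_r : forall A B (f : Hom A B), comp f (idm A) = f;
  comp_assoc : forall A B D E (h : Hom D E) (g : Hom B D) (f : Hom A B),
      comp h (comp g f) = comp (comp h g) f
}.

Arguments Hom {c} _ _.
Arguments idm {c} _.
Arguments comp {c A B D} _ _.

Notation "g \o f" := (comp g f) (at level 40, left associativity).

Section Defs.
Context {C : Category}.

Definition mono {A B : C} (f : Hom A B) : Prop :=
  forall S (g h : Hom S A), f \o g = f \o h -> g = h.

Definition is_terminal (T : C) : Prop :=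
  forall A : C, exists! f : Hom A T, True.

Definition is_product2 {X Y P : C} (p1 : Hom P X) (p2 : Hom P Y) : Prop :=
  forall S (x : Hom S X) (y : Hom S Y),
    exists! u : Hom S P, p1 \o u = x /\ p2 \o u = y.

Definition is_product3 {X Y Z P : C}
  (p1 : Hom P X) (p2 : Hom P Y) (p3 : Hom P Z) : Prop :=
  forall S (x : Hom S X) (y : Hom S Y) (z : Hom S Z),
    exists! u : Hom S P, p1 \o u = x /\ p2 \o u = y /\ p3 \o u = z.

Definition is_equalizer {E X Y : C} (f g : Hom X Y) (e : Hom E X) : Prop :=
  f \o e = g \o e /\
  forall S (h : Hom S X), f \o h = g \o h -> exists! u : Hom S E, e \o u = h.

Definition is_pullback {X Y Z P : C} (f : Hom X Z) (g : Hom Y Z)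
  (p1 : Hom P X) (p2 : Hom P Y) : Prop :=
  f \o p1 = g \o p2 /\
  forall S (x : Hom S X) (y : Hom S Y), f \o x = g \o y ->
    exists! u : Hom S P, p1 \o u = x /\ p2 \o u = y.

Definition is_coequalizer {A B Q : C} (f g : Hom A B) (q : Hom B Q) : Prop :=
  q \o f = q \o g /\
  forall T (h : Hom B T), h \o f = h \o g -> exists! u : Hom Q T, u \o q = h.

Definition regular_epi {B Q : C} (q : Hom B Q) : Prop :=
  exists (A : C) (f g : Hom A B), is_coequalizer f g q.

Definition has_finite_limits : Prop :=
  (exists T : C, is_terminal T) /\
  (forall X Y : C, exists (P : C) (p1 : Hom P X) (p2 : Hom P Y), is_product2 p1 p2) /\
  (forall (X Y : C) (f g : Hom X Y), exists (E : C) (e : Hom E X), is_equalizer f g e) /\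
  (forall (X Y Z : C) (f : Hom X Z) (g : Hom Y Z),
      exists (P : C) (p1 : Hom P X) (p2 : Hom P Y), is_pullback f g p1 p2).

Definition has_coeq_of_kernel_pairs : Prop :=
  forall (X Y : C) (f : Hom X Y) (K : C) (k1 k2 : Hom K X),
    is_pullback f f k1 k2 -> exists (Q : C) (q : Hom X Q), is_coequalizer k1 k2 q.

Definition regular_epis_pullback_stable : Prop :=
  forall (A B Z : C) (q : Hom A Z) (g : Hom B Z) (P : C) (p1 : Hom P A) (p2 : Hom P B),
    regular_epi q -> is_pullback q g p1 p2 -> regular_epi p2.

Definition regular_category : Prop :=
  has_finite_limits /\ has_coeq_of_kernel_pairs /\ regular_epis_pullback_stable.

(* A binary relation R <= X x Y: a mono into a (chosen) product cone. *)
Record Rel2 (X Y : C) := {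
  r2P : C; r2p1 : Hom r2P X; r2p2 : Hom r2P Y;
  r2prod : is_product2 r2p1 r2p2;
  r2O : C; r2m : Hom r2O r2P; r2mono : mono r2m }.

Record Rel3 (X Y Z : C) := {
  r3P : C; r3p1 : Hom r3P X; r3p2 : Hom r3P Y; r3p3 : Hom r3P Z;
  r3prod : is_product3 r3p1 r3p2 r3p3;
  r3O : C; r3m : Hom r3O r3P; r3mono : mono r3m }.

(* (x,y) \in_S R : the morphism (x,y) : S -> X x Y factors through R *)
Definition mem2 {X Y S : C} (R : Rel2 X Y) (x : Hom S X) (y : Hom S Y) : Prop :=
  exists u : Hom S (r2O R),
    r2p1 R \o (r2m R \o u) = x /\ r2p2 R \o (r2m R \o u) = y.

Definition mem3 {X Y Z S : C} (R : Rel3 X Y Z)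
  (x : Hom S X) (y : Hom S Y) (z : Hom S Z) : Prop :=
  exists u : Hom S (r3O R),
    r3p1 R \o (r3m R \o u) = x /\ r3p2 R \o (r3m R \o u) = y /\
    r3p3 R \o (r3m R \o u) = z.

Definition majority_selecting {X Y Z : C} (R : Rel3 X Y Z) : Prop :=
  forall (S : C) (x x' : Hom S X) (y y' : Hom S Y) (z z' : Hom S Z),
    mem3 R x y z' -> mem3 R x y' z -> mem3 R x' y z -> mem3 R x y z.

Definition majority_category : Prop :=
  forall (X Y Z : C) (R : Rel3 X Y Z), majority_selecting R.

Definition is_equivalence_relation {X : C} (E : Rel2 X X) : Prop :=
  (forall S (a : Hom S X), mem2 E a a) /\
  (forall S (a b : Hom S X), mem2 E a b -> mem2 E b a) /\
  (forall S (a b c : Hom S X), mem2 E a b -> mem2 E b c -> mem2 E a c).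

Definition effective_equivalence_relation {X : C} (E : Rel2 X X) : Prop :=
  is_equivalence_relation E /\
  exists (Y : C) (f : Hom X Y),
    is_pullback f f (r2p1 E \o r2m E) (r2p2 E \o r2m E).

Definition approx_solvable {X S : C} (I : nat -> Prop)
  (a : nat -> Hom S X) (theta : nat -> Rel2 X X) : Prop :=
  exists (Q : C) (alpha : Hom Q S) (x : Hom Q X),
    regular_epi alpha /\ forall i, I i -> mem2 (theta i) x (a i \o alpha).

Definition approx_pairwise_solvable {X S : C} (m : nat)
  (a : nat -> Hom S X) (theta : nat -> Rel2 X X) : Prop :=
  forall i j, i < m -> j < m ->
    approx_solvable (fun k => k = i \/ k = j) a theta.

Definition pairwise_CRT : Prop :=
  forall (X S : C) (m : nat) (a : nat -> Hom S X) (theta : nat -> Rel2 X X),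
    (forall i, i < m -> effective_equivalence_relation (theta i)) ->
    approx_pairwise_solvable m a theta ->
    approx_solvable (fun k => k < m) a theta.

End Defs.

From Stdlib Require Import List Lia Wf_nat.
Import ListNotations.

(** Each congruence x = a_i mod theta_i with theta_i the kernel pair of f_i
    is the equation f_i x = f_i a_i, and finitely many equations form a single
    one with values in a product.  Given three equations f_j x = b_j, each two
    of which are approximately solvable, refine the three partial solutions to
    a common regular-epi cover; then (b1, b2, f3 x3), (b1, f2 x2, b3) and
    (f1 x1, b2, b3) lie in the image R of (f1, f2, f3) : X -> Y1 x Y2 x Y3, so
    the majority property puts (b1, b2, b3) in R, and pulling back along the
    regular epi X ->> R gives an approximate solution of all three.  Splitting
    a system of at least three congruences into three blocks, induction on its
    size reduces everything to pairs. *)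

Ltac assoc_right := repeat rewrite <- comp_assoc.

Section Morphisms.
Context {C : Category}.

Definition epi {A B : C} (f : Hom A B) : Prop :=
  forall D (g h : Hom B D), g \o f = h \o f -> g = h.

Lemma regular_epi_epi {A B : C} {q : Hom A B} : regular_epi q -> epi q.
Proof.
  intros [E [f [g [Hq Huniv]]]] D g1 g2 Heq.
  destruct (Huniv D (g1 \o q)) as [u [_ Hu]].
  { assoc_right. rewrite Hq. reflexivity. }
  rewrite <- (Hu g1 eq_refl). apply Hu. symmetry. exact Heq.
Qed.

Lemma epi_comp {A B D : C} {f : Hom A B} {g : Hom B D} :
  epi f -> epi g -> epi (g \o f).
Proof.
  intros Hf Hg Z x y H. apply Hg, Hf. rewrite <- !comp_assoc. exact H.
Qed.

Lemma regular_epi_id (A : C) : regular_epi (idm A).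
Proof.
  exists A, (idm A), (idm A). split; [reflexivity|].
  intros T h _. exists h. split; [apply comp_id_r|].
  intros u Hu. rewrite comp_id_r in Hu. symmetry. exact Hu.
Qed.

Lemma regular_epi_mono_diagonal {A B I D : C} (q : Hom A B) (m : Hom I D)
  (u : Hom A I) (v : Hom B D) :
  regular_epi q -> mono m -> m \o u = v \o q ->
  exists d : Hom B I, d \o q = u /\ m \o d = v.
Proof.
  intros Hq Hm Hsq.
  pose proof (regular_epi_epi Hq) as Hepi.
  destruct Hq as [E [f [g [Hfg Huniv]]]].
  destruct (Huniv I u) as [d [Hd _]].
  { apply Hm. rewrite !comp_assoc, Hsq. assoc_right. rewrite Hfg. reflexivity. }
  exists d. split; [exact Hd|].
  apply Hepi. rewrite <- comp_assoc, Hd. exact Hsq.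
Qed.

Lemma regular_epi_iso_comp {A B D : C} (e : Hom A B) (i : Hom B D) (j : Hom D B) :
  regular_epi e -> j \o i = idm B -> i \o j = idm D -> regular_epi (i \o e).
Proof.
  intros [E [f [g [Hfg Huniv]]]] Hji Hij.
  exists E, f, g. split.
  { assoc_right. rewrite Hfg. reflexivity. }
  intros T h Hh. destruct (Huniv T h Hh) as [u [Hu Huniq]].
  exists (u \o j). split.
  - rewrite <- comp_assoc, (comp_assoc j i e), Hji, comp_id_l. exact Hu.
  - intros u' Hu'.
    rewrite (Huniq (u' \o i)) by (rewrite <- comp_assoc; exact Hu').
    rewrite <- comp_assoc, Hij, comp_id_r. reflexivity.
Qed.

Lemma product2_ext {X Y P S : C} {p1 : Hom P X} {p2 : Hom P Y} {u v : Hom S P} :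
  is_product2 p1 p2 -> p1 \o u = p1 \o v -> p2 \o u = p2 \o v -> u = v.
Proof.
  intros Hp H1 H2. destruct (Hp S (p1 \o v) (p2 \o v)) as [w [_ Hw]].
  rewrite <- (Hw u (conj H1 H2)). apply Hw. auto.
Qed.

End Morphisms.

Section RegularCategory.
Context {C : Category}.
Hypothesis HR : regular_category (C:=C).

Lemma pullback_regular_epi {A Z B : C} (q : Hom A Z) (g : Hom B Z) :
  regular_epi q ->
  exists P (p1 : Hom P A) (p2 : Hom P B), q \o p1 = g \o p2 /\ regular_epi p2.
Proof.
  intros Hq. destruct HR as [[_ [_ [_ Hpb]]] [_ Hstab]].
  destruct (Hpb _ _ _ q g) as [P [p1 [p2 HP]]].
  exists P, p1, p2. split; [apply HP | exact (Hstab _ _ _ q g _ p1 p2 Hq HP)].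
Qed.

(* The coimage of h (coequalizer of its kernel pair) is its image: the
   comparison map is mono because regular epis are stable under pullback. *)
Lemma image_factorization {A B : C} (h : Hom A B) :
  exists I (e : Hom A I) (m : Hom I B), regular_epi e /\ mono m /\ m \o e = h.
Proof.
  pose proof HR as [[_ [_ [_ Hpb]]] [Hcoeq _]].
  destruct (Hpb _ _ _ h h) as [K [k1 [k2 [Hk Hkuniv]]]].
  destruct (Hcoeq _ _ h K k1 k2 (conj Hk Hkuniv)) as [I [e He]].
  destruct He as [Hek Heuniv].
  destruct (Heuniv B h Hk) as [m [Hme _]].
  assert (Hre : regular_epi e) by (exists K, k1, k2; split; assumption).
  exists I, e, m. split; [exact Hre | split; [|exact Hme]].
  intros S u v Huv.
  destruct (pullback_regular_epi e u Hre) as [P1 [c1 [d1 [Hc1 Hd1]]]].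
  destruct (pullback_regular_epi e (v \o d1) Hre) as [P2 [c2 [d2 [Hc2 Hd2]]]].
  destruct (Hkuniv P2 (c1 \o d2) c2) as [w [[Hw1 Hw2] _]].
  { rewrite <- Hme. assoc_right.
    rewrite (comp_assoc e c1 d2), Hc1, Hc2. assoc_right.
    rewrite !(comp_assoc m), Huv. reflexivity. }
  apply (epi_comp (regular_epi_epi Hd2) (regular_epi_epi Hd1)).
  assoc_right. rewrite (comp_assoc u d1 d2), <- Hc1, <- comp_assoc, <- Hw1,
    comp_assoc, Hek, <- comp_assoc, Hw2, Hc2.
  assoc_right. reflexivity.
Qed.

Lemma regular_epi_comp {A B D : C} (f : Hom A B) (g : Hom B D) :
  regular_epi f -> regular_epi g -> regular_epi (g \o f).
Proof.
  intros Hf Hg.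
  destruct (image_factorization (g \o f)) as [I [e [m [He [Hm Hme]]]]].
  destruct (regular_epi_mono_diagonal f m e g Hf Hm Hme) as [d1 [Hd1 Hmd1]].
  destruct (regular_epi_mono_diagonal g m d1 (idm D) Hg Hm) as [d [Hd Hmd]].
  { rewrite comp_id_l. exact Hmd1. }
  assert (Hdm : d \o m = idm I).
  { apply Hm. rewrite comp_assoc, Hmd, comp_id_l, comp_id_r. reflexivity. }
  rewrite <- Hme. exact (regular_epi_iso_comp e m d He Hdm Hmd).
Qed.

Lemma common_regular_refinement {Q1 Q2 S : C} (a1 : Hom Q1 S) (a2 : Hom Q2 S) :
  regular_epi a1 -> regular_epi a2 ->
  exists P (b : Hom P S) (r1 : Hom P Q1) (r2 : Hom P Q2),
    regular_epi b /\ a1 \o r1 = b /\ a2 \o r2 = b.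
Proof.
  intros H1 H2. destruct (pullback_regular_epi a1 a2 H1) as [P [r1 [r2 [Hr Hr2]]]].
  exists P, (a2 \o r2), r1, r2. split; [apply regular_epi_comp|]; auto.
Qed.

Lemma common_regular_refinement3 {Q1 Q2 Q3 S : C}
  (a1 : Hom Q1 S) (a2 : Hom Q2 S) (a3 : Hom Q3 S) :
  regular_epi a1 -> regular_epi a2 -> regular_epi a3 ->
  exists P (b : Hom P S) (r1 : Hom P Q1) (r2 : Hom P Q2) (r3 : Hom P Q3),
    regular_epi b /\ a1 \o r1 = b /\ a2 \o r2 = b /\ a3 \o r3 = b.
Proof.
  intros H1 H2 H3.
  destruct (common_regular_refinement a1 a2 H1 H2) as [P0 [b0 [s1 [s2 [Hb0 [E1 E2]]]]]].
  destruct (common_regular_refinement b0 a3 Hb0 H3) as [P [b [s0 [r3 [Hb [E0 E3]]]]]].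
  exists P, b, (s1 \o s0), (s2 \o s0), r3.
  rewrite !comp_assoc, E1, E2. auto.
Qed.

Lemma product3_exists (Y1 Y2 Y3 : C) :
  exists P (q1 : Hom P Y1) (q2 : Hom P Y2) (q3 : Hom P Y3), is_product3 q1 q2 q3.
Proof.
  destruct HR as [[_ [Hprod _]] _].
  destruct (Hprod Y2 Y3) as [P23 [r2 [r3 Hr]]].
  destruct (Hprod Y1 P23) as [P [q1 [q Hq]]].
  exists P, q1, (r2 \o q), (r3 \o q).
  intros S y1 y2 y3.
  destruct (Hr S y2 y3) as [w [[Hw2 Hw3] _]].
  destruct (Hq S y1 w) as [u [[Hu1 Hu] Huniq]].
  exists u. split.
  - rewrite <- !comp_assoc, Hu. auto.
  - intros u' [H1 [H2 H3]]. apply Huniq. split; [exact H1|].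
    apply (product2_ext Hr); rewrite ?Hw2, ?Hw3, ?comp_assoc; assumption.
Qed.

Lemma image_relation3 {X Y1 Y2 Y3 : C} (f1 : Hom X Y1) (f2 : Hom X Y2) (f3 : Hom X Y3) :
  exists R : Rel3 Y1 Y2 Y3,
    (forall P (x : Hom P X), mem3 R (f1 \o x) (f2 \o x) (f3 \o x)) /\
    (forall P (y1 : Hom P Y1) (y2 : Hom P Y2) (y3 : Hom P Y3), mem3 R y1 y2 y3 ->
       exists P' (g : Hom P' P) (x : Hom P' X), regular_epi g /\
         f1 \o x = y1 \o g /\ f2 \o x = y2 \o g /\ f3 \o x = y3 \o g).
Proof.
  destruct (product3_exists Y1 Y2 Y3) as [PY [q1 [q2 [q3 Hp]]]].
  destruct (Hp X f1 f2 f3) as [h [[Hh1 [Hh2 Hh3]] _]].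
  destruct (image_factorization h) as [I [e [m [He [Hm Hme]]]]].
  exists {| r3P := PY; r3p1 := q1; r3p2 := q2; r3p3 := q3; r3prod := Hp;
            r3O := I; r3m := m; r3mono := Hm |}.
  unfold mem3; cbn. split.
  - intros P x. exists (e \o x).
    rewrite !(comp_assoc m), Hme, !comp_assoc, Hh1, Hh2, Hh3. auto.
  - intros P y1 y2 y3 [u [Hu1 [Hu2 Hu3]]].
    destruct (pullback_regular_epi e u He) as [P' [x [g [Hx Hg]]]].
    exists P', g, x. split; [exact Hg|].
    rewrite <- Hu1, <- Hu2, <- Hu3, <- Hh1, <- Hh2, <- Hh3, <- Hme.
    assoc_right. rewrite Hx. auto.
Qed.

End RegularCategory.

Section Equations.
Context {C : Category}.

(* [approx_solvable I a theta] is convertible to an instance of this. *)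
Definition approx_solvable_by {X S : C} (P : forall Q : C, Hom Q S -> Hom Q X -> Prop) :
  Prop :=
  exists (Q : C) (alpha : Hom Q S) (x : Hom Q X), regular_epi alpha /\ P Q alpha x.

Lemma approx_solvable_by_impl {X S : C} (P P' : forall Q : C, Hom Q S -> Hom Q X -> Prop) :
  (forall Q alpha x, P Q alpha x -> P' Q alpha x) ->
  approx_solvable_by P -> approx_solvable_by P'.
Proof.
  intros HPP' [Q [alpha [x [Halpha HP]]]]. exists Q, alpha, x. auto.
Qed.

Lemma solution_precomp {Q P S X Y : C} (f : Hom X Y) (b : Hom S Y)
  (alpha : Hom Q S) (x : Hom Q X) (r : Hom P Q) :
  f \o x = b \o alpha -> f \o (x \o r) = b \o (alpha \o r).
Proof. intros H. rewrite !comp_assoc, H. reflexivity. Qed.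

Lemma majority_three_equations (HR : regular_category (C:=C)) (HM : majority_category (C:=C))
  {X S Y1 Y2 Y3 : C} (f1 : Hom X Y1) (f2 : Hom X Y2) (f3 : Hom X Y3)
  (b1 : Hom S Y1) (b2 : Hom S Y2) (b3 : Hom S Y3) :
  approx_solvable_by (fun Q alpha x => f2 \o x = b2 \o alpha /\ f3 \o x = b3 \o alpha) ->
  approx_solvable_by (fun Q alpha x => f1 \o x = b1 \o alpha /\ f3 \o x = b3 \o alpha) ->
  approx_solvable_by (fun Q alpha x => f1 \o x = b1 \o alpha /\ f2 \o x = b2 \o alpha) ->
  approx_solvable_by (fun Q alpha x =>
    f1 \o x = b1 \o alpha /\ f2 \o x = b2 \o alpha /\ f3 \o x = b3 \o alpha).
Proof.
  intros [Q1 [a1 [x1 [Ha1 [H12 H13]]]]] [Q2 [a2 [x2 [Ha2 [H21 H23]]]]]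
         [Q3 [a3 [x3 [Ha3 [H31 H32]]]]].
  destruct (common_regular_refinement3 HR a1 a2 a3 Ha1 Ha2 Ha3)
    as [P [b [r1 [r2 [r3 [Hb [E1 [E2 E3]]]]]]]].
  pose proof (solution_precomp _ _ _ _ r1 H12) as F12.
  pose proof (solution_precomp _ _ _ _ r1 H13) as F13.
  pose proof (solution_precomp _ _ _ _ r2 H21) as F21.
  pose proof (solution_precomp _ _ _ _ r2 H23) as F23.
  pose proof (solution_precomp _ _ _ _ r3 H31) as F31.
  pose proof (solution_precomp _ _ _ _ r3 H32) as F32.
  rewrite E1 in F12, F13. rewrite E2 in F21, F23. rewrite E3 in F31, F32.
  destruct (image_relation3 HR f1 f2 f3) as [R [Rimage Rlocal]].
  assert (Hmaj : mem3 R (b1 \o b) (b2 \o b) (b3 \o b)).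
  { apply (HM _ _ _ R P _ (f1 \o (x1 \o r1)) _ (f2 \o (x2 \o r2)) _ (f3 \o (x3 \o r3))).
    - rewrite <- F31, <- F32. apply Rimage.
    - rewrite <- F21, <- F23. apply Rimage.
    - rewrite <- F12, <- F13. apply Rimage. }
  destruct (Rlocal _ _ _ _ Hmaj) as [P' [g [x [Hg [G1 [G2 G3]]]]]].
  exists P', (b \o g), x. split; [exact (regular_epi_comp HR g b Hg Hb)|].
  rewrite !comp_assoc. auto.
Qed.

Lemma equation_true (HR : regular_category (C:=C)) (X S : C) :
  exists Y (f : Hom X Y) (b : Hom S Y), forall Q (alpha : Hom Q S) (x : Hom Q X),
    f \o x = b \o alpha.
Proof.
  destruct HR as [[[T HT] _] _].
  destruct (HT X) as [f _]. destruct (HT S) as [b _].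
  exists T, f, b. intros Q alpha x.
  destruct (HT Q) as [t [_ Ht]].
  rewrite <- (Ht (f \o x) I). apply Ht. exact I.
Qed.

Lemma equation_and (HR : regular_category (C:=C)) {X S Y1 Y2 : C}
  (f1 : Hom X Y1) (b1 : Hom S Y1) (f2 : Hom X Y2) (b2 : Hom S Y2) :
  exists Y (f : Hom X Y) (b : Hom S Y), forall Q (alpha : Hom Q S) (x : Hom Q X),
    f \o x = b \o alpha <-> f1 \o x = b1 \o alpha /\ f2 \o x = b2 \o alpha.
Proof.
  destruct HR as [[_ [Hprod _]] _].
  destruct (Hprod Y1 Y2) as [P [p1 [p2 Hp]]].
  destruct (Hp X f1 f2) as [f [[Hf1 Hf2] _]].
  destruct (Hp S b1 b2) as [b [[Hb1 Hb2] _]].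
  exists P, f, b. intros Q alpha x. split.
  - intros H. rewrite <- Hf1, <- Hf2, <- Hb1, <- Hb2. assoc_right. rewrite H. auto.
  - intros [H1 H2]. apply (product2_ext Hp); rewrite !comp_assoc.
    + rewrite Hf1, Hb1. exact H1.
    + rewrite Hf2, Hb2. exact H2.
Qed.

Lemma mem2_kernel_pair {X Y S : C} (E : Rel2 X X) (F : Hom X Y) (x y : Hom S X) :
  is_pullback F F (r2p1 E \o r2m E) (r2p2 E \o r2m E) ->
  mem2 E x y <-> F \o x = F \o y.
Proof.
  intros [Hk Hkuniv]. split.
  - intros [u [<- <-]].
    rewrite !comp_assoc, <- (comp_assoc F (r2p1 E)), Hk. assoc_right. reflexivity.
  - intros H. destruct (Hkuniv S x y H) as [w [[Hw1 Hw2] _]].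
    exists w. rewrite !comp_assoc. auto.
Qed.

End Equations.

Section PairwiseCRT.
Context {C : Category}.
Hypothesis HR : regular_category (C:=C).
Hypothesis HM : majority_category (C:=C).
Context {X S : C} {m : nat} {a : nat -> Hom S X} {theta : nat -> Rel2 X X}.
Hypothesis theta_effective : forall i, i < m -> effective_equivalence_relation (theta i).

Definition solves_indices (l : list nat) (Q : C) (alpha : Hom Q S) (x : Hom Q X) : Prop :=
  forall k, In k l -> mem2 (theta k) x (a k \o alpha).

Lemma indices_as_equation (l : list nat) : (forall k, In k l -> k < m) ->
  exists Y (f : Hom X Y) (b : Hom S Y), forall Q (alpha : Hom Q S) (x : Hom Q X),
    f \o x = b \o alpha <-> solves_indices l Q alpha x.
Proof.
  unfold solves_indices.
  induction l as [|k l IH]; intros Hl.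
  - destruct (equation_true HR X S) as [Y [f [b Hfb]]].
    exists Y, f, b. intros Q alpha x. split; [intros _ k []|auto].
  - destruct IH as [Y [f [b Hfb]]]. { intros k' Hk'. apply Hl. right. exact Hk'. }
    destruct (theta_effective k (Hl k (or_introl eq_refl))) as [_ [Yk [Fk HFk]]].
    destruct (equation_and HR Fk (Fk \o a k) f b) as [Y' [f' [b' Hf'b']]].
    exists Y', f', b'. intros Q alpha x.
    rewrite Hf'b', Hfb, <- comp_assoc, <- (mem2_kernel_pair _ _ _ _ HFk).
    split.
    + intros [Hk Hl'] k' [<-|Hk']; auto.
    + intros H. split; [apply H; left|intros k' Hk'; apply H; right]; auto.
Qed.

Lemma approx_solvable_indices_app3 (l1 l2 l3 : list nat) :
  (forall k, In k (l1 ++ l2 ++ l3) -> k < m) ->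
  approx_solvable_by (solves_indices (l2 ++ l3)) ->
  approx_solvable_by (solves_indices (l1 ++ l3)) ->
  approx_solvable_by (solves_indices (l1 ++ l2)) ->
  approx_solvable_by (solves_indices (l1 ++ l2 ++ l3)).
Proof.
  intros Hl H23 H13 H12.
  unfold solves_indices in *.
  destruct (indices_as_equation l1) as [Y1 [f1 [b1 E1]]].
  { intros k Hk. apply Hl. apply in_app_iff. auto. }
  destruct (indices_as_equation l2) as [Y2 [f2 [b2 E2]]].
  { intros k Hk. apply Hl. rewrite !in_app_iff. auto. }
  destruct (indices_as_equation l3) as [Y3 [f3 [b3 E3]]].
  { intros k Hk. apply Hl. rewrite !in_app_iff. auto. }
  unfold solves_indices in E1, E2, E3.
  refine (approx_solvable_by_impl _ _ _ (majority_three_equations HR HM f1 f2 f3 b1 b2 b3 _ _ _)).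
  - intros Q alpha x [F1 [F2 F3]] k.
    rewrite E1 in F1. rewrite E2 in F2. rewrite E3 in F3.
    rewrite !in_app_iff. intros [Hk|[Hk|Hk]]; auto.
  - refine (approx_solvable_by_impl _ _ _ H23).
    intros Q alpha x H. rewrite E2, E3. split; intros k Hk; apply H, in_app_iff; auto.
  - refine (approx_solvable_by_impl _ _ _ H13).
    intros Q alpha x H. rewrite E1, E3. split; intros k Hk; apply H, in_app_iff; auto.
  - refine (approx_solvable_by_impl _ _ _ H12).
    intros Q alpha x H. rewrite E1, E2. split; intros k Hk; apply H, in_app_iff; auto.
Qed.

Lemma approx_solvable_indices (Hpairs : approx_pairwise_solvable m a theta) (l : list nat) :
  (forall k, In k l -> k < m) -> approx_solvable_by (solves_indices l).
Proof.
  induction l as [l IH] using (induction_ltof1 _ (@length nat)); intros Hl.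
  destruct l as [|i1 [|i2 [|i3 rest]]].
  - exists S, (idm S), (a 0). split; [apply regular_epi_id | intros k []].
  - refine (approx_solvable_by_impl _ _ _ (Hpairs i1 i1 _ _)); [|apply Hl; left..]; auto.
    intros Q alpha x H k [<-|[]]. auto.
  - refine (approx_solvable_by_impl _ _ _ (Hpairs i1 i2 _ _)); [|apply Hl; simpl..]; auto.
    intros Q alpha x H k [<-|[<-|[]]]; auto.
  - apply (approx_solvable_indices_app3 [i1] [i2] (i3 :: rest) Hl);
      (apply IH; [unfold ltof; simpl; lia | intros k Hk; apply Hl; simpl in *; tauto]).
Qed.

End PairwiseCRT.

Theorem lemma5p7 (C : Category) :
  @regular_category C -> @majority_category C -> @pairwise_CRT C.
Proof.
  intros HR HM X S m a theta Heff Hpairs.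
  refine (approx_solvable_by_impl _ _ _
            (approx_solvable_indices HR HM Heff Hpairs (seq 0 m) _)).
  - intros Q alpha x H k Hk. apply H, in_seq. lia.
  - intros k Hk. apply in_seq in Hk. lia.
Qed.
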